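(* Let $P=[p_{f,k}]$, $f\in[0,F)$, $k\in[0,K)$, be a $(K,F,S)$ MRA. Consider an MADC model with $K$ reducer nodes indexed by $[0,K)$ and $F$ batches of files $B_0,\dots,B_{F-1}$, with some number $\Lambda$ of mapper nodes and computation load $r$, in which the batches are assigned to the mapper nodes and the mapper nodes are connected to the reducer nodes in such a way that every reducer node $k\in[0,K)$ has access to all batches in the set $$R_k=\{B_f:\ p_{f,k}=*,\ f\in[0,F)\}.$$ Then the communication load $$L(r)=\frac{S}{KF}+\sum_{g=2}^{K}\frac{S_g}{KF(g-1)}$$ is achievable for this MADC model, where $S_g$ denotes the number of integers in $[0,S)$ that appear exactly $g$ times in $P$.
   Context: Notation: $[0,n)=\{0,1,\dots,n-1\}$, $[n]=\{1,\dots,n\}$. MADC (multi-access distributed computing) model: There are $\Lambda$ mapper nodes indexed by $[0,\Lambda)$ and $K$ reducer nodes indexed by $[0,K)$. There are $N$ input files $w_0,\dots,w_{N-1}\in\mathbb{F}_{2^d}$ and $Q$ output functions $\phi_q:\mathbb{F}_{2^d}^N\to\mathbb{F}_{2^b}$, $q\in[0,Q)$, of the form $\phi_q(w_0,\dots,w_{N-1})=h_q(v_{q,0},\dots,v_{q,N-1})$, where $v_{q,n}=g_{q,n}(w_n)\in\mathbb{F}_{2^t}$ is called an intermediate value (IV). Each reducer node $k$ is assigned a set $\mathcal W_k\subseteq[0,Q)$ of $Q/K$ output functions, these sets being pairwise disjoint. The files are partitioned into $F$ disjoint batches of $N/F$ files each. Map phase: each mapper node $\lambda$ stores a set $M_\lambda$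 of batches and computes all IVs $v_{q,n}$, $q\in[0,Q)$, for all files $w_n$ in its stored batches. Each reducer node is connected to a set of mapper nodes and has access to every batch stored at any mapper node it is connected to, together with all IVs computed from those batches. Shuffle phase: each reducer node $k$ broadcasts to all other reducer nodes, error-free, a message $\mathbf X_k$ of $l_k$ bits that is a function of the IVs it has access to. Reduce phase: each reducer node $k$ must recover all IVs $v_{q,n}$ with $q\in\mathcal W_k$, $n\in[0,N)$, from the received messages and the IVs it has access to. The computation load is $r=\sum_{\lambda=0}^{\Lambda-1}|M_\lambda|/F$ and the communication load is $L=\sum_{k=0}^{K-1}l_k/(QNt)$. A communication load $L$ is achievable for a given model (given batches, mapper storage and mapper–reducer connections) if there exists a shuffle/reduce scheme satisfying all decoding requirements that attains $L$ (for a suitable choice of the number of files per batch, the number of functions per reducer, and the IV length $t$). Map-Reduce Array (MRA): For positive integers $K,F,S$, an $F\times K$ array $P=[p_{f,k}]$, $f\in[0,F)$, $k\in[0,K)$, whose entries are either the symbol $*$ or integers from $[0,S)$, with every integer of $[0,S)$ occurring in $P$, is a $(K,F,S)$ MRA if: (C1) each integer occurs more than once in $P$; (C2) whenever two distinct entries satisfy $p_{f_1,k_1}=p_{f_2,k_2}=s$ with $s$ an integer, then $f_1\neq f_2$, $k_1\neq k_2$, and $p_{f_1,k_2}=p_{f_2,k_1}=*$. It is a $g$-regular MRA (for a constant $g\ge 2$) if it satisfies (C2) and every integer occurs exactly $g$ times. *)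

From HB Require Import structures.
From mathcomp Require Import all_boot all_order all_algebra.
Set Implicit Arguments. Unset Strict Implicit. Unset Printing Implicit Defensive.
Import Order.TTheory GRing.Theory Num.Theory.

(* An F x K array whose entries are either * (None) or integers (Some s). *)
Definition array (F K : nat) := 'I_F -> 'I_K -> option nat.

Definition occ F K (P : array F K) (s : nat) : nat :=
  #|[set fk : 'I_F * 'I_K | P fk.1 fk.2 == Some s]|.

Definition is_MRA (K F S : nat) (P : array F K) : Prop :=
  (forall f k s, P f k = Some s -> s < S) /\
  (forall s, s < S -> exists f k, P f k = Some s) /\
  (forall s, s < S -> 1 < occ P s) /\
  (forall f1 k1 f2 k2 s, (f1, k1) != (f2, k2) ->
     P f1 k1 = Some s -> P f2 k2 = Some s ->
     [/\ f1 != f2, k1 != k2, P f1 k2 = None & P f2 k1 = None]).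

Definition S_g F K S (P : array F K) (g : nat) : nat :=
  #|[set s : 'I_S | occ P s == g]|.

Definition L_MRA F K S (P : array F K) : rat :=
  (S%:R / (K * F)%:R + \sum_(2 <= g < K.+1) (S_g S P g)%:R / (K * F * (g - 1))%:R)%R.

(* Batches accessible to reducer k: union of the batches stored at the mapper
   nodes connected to k.  M : storage of mapper nodes, Conn : connections. *)
Definition access (F K Lam : nat) (M : 'I_Lam -> {set 'I_F})
  (Conn : 'I_K -> {set 'I_Lam}) (k : 'I_K) : {set 'I_F} :=
  \bigcup_(lam in Conn k) M lam.

(* Intermediate values v_{q,n} in F_{2^t}, represented as t-bit strings. *)
Definition IVs (Q N t : nat) := 'I_Q -> 'I_N -> t.-tuple bool.

(* With N = F*m files, file n belongs to batch n %/ m. *)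
Definition file_acc (F m : nat) (A : {set 'I_F}) (n : nat) : bool :=
  [exists f in A, n %/ m == val f].

(* Achievability of communication load L for the MADC model given by
   (K reducers, F batches, mappers 'I_Lam storing M, connections Conn):
   there exist m files per batch (N = F*m), eta functions per reducer
   (Q = K*eta, reducer k assigned W_k = {q | q %/ eta = k}), IV length t,
   message lengths l_k, encoders and decoders satisfying the access
   constraints and the decoding requirements, with load exactly L. *)
Definition achievable (K F Lam : nat) (M : 'I_Lam -> {set 'I_F})
  (Conn : 'I_K -> {set 'I_Lam}) (L : rat) : Prop :=
  exists (m eta t : nat) (l : 'I_K -> nat)
         (enc : 'I_K -> IVs (K * eta) (F * m) t -> seq bool)
         (dec : 'I_K -> ('I_K -> seq bool) -> IVs (K * eta) (F * m) t ->
                'I_(K * eta) -> 'I_(F * m) -> t.-tuple bool),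
    (0 < m /\ 0 < eta /\ 0 < t) /\
     (forall k v, size (enc k v) = l k) /\
     (forall k (v v' : IVs (K * eta) (F * m) t),
        (forall q (n : 'I_(F * m)), file_acc m (access M Conn k) n -> v q n = v' q n) ->
        enc k v = enc k v') /\
     (forall k (X X' : 'I_K -> seq bool) (v v' : IVs (K * eta) (F * m) t),
        (forall j, j != k -> X j = X' j) ->
        (forall q (n : 'I_(F * m)), file_acc m (access M Conn k) n -> v q n = v' q n) ->
        dec k X v = dec k X' v') /\
     (forall (k : 'I_K) (v : IVs (K * eta) (F * m) t) (q : 'I_(K * eta)) (n : 'I_(F * m)),
        q %/ eta = k -> dec k (fun j => enc j v) v q n = v q n) /\
     L = ((\sum_k l k)%:R / (K * eta * (F * m) * t)%:R)%R.

From HB Require Import structures.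
From mathcomp Require Import all_boot all_order all_algebra.
From Stdlib Require Import FunctionalExtensionality.
From mathcomp Require Import ring.
Import GRing.Theory Num.Theory.
Set Implicit Arguments. Unset Strict Implicit. Unset Printing Implicit Defensive.

(* Take one file per batch, one function per reducer and IVs of K! bits.  An
   integer s occurring g times in P, at (f_i, i) for i in the set A_s of its g
   columns, stands for the IV v_{i,f_i} that reducer i misses, while by (C2)
   every other j in A_s has batch f_i.  Cut v_{i,f_i} into g-1 segments, one for
   each j in A_s \ {i}.  For every such s, reducer j broadcasts the XOR over
   i in A_s \ {j} of the segments of v_{i,f_i} labelled j; reducer i knows all
   summands but its own and thus recovers it.  Since g-1 <= K divides K!, the
   integer s costs g K!/(g-1) = K! + K!/(g-1) bits, which sums to L(r) K F K!. *)

Lemma sum_nat_indicator a b x (h : nat -> nat) : a <= x < b ->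
  \sum_(a <= g < b) (x == g) * h g = h x.
Proof.
move=> Hx; rewrite (bigD1_seq x) ?mem_index_iota ?iota_uniq //= eqxx mul1n.
by rewrite big1 ?addn0 // => g; rewrite eq_sym => /negbTE ->.
Qed.

Section MapReduceArray.

Variables (K F S : nat) (P : array F K).

Definition holders (s : nat) : {set 'I_K} := [set k | [exists f, P f k == Some s]].

Definition mult (s : nat) : nat := #|holders s|.

Lemma mem_holders f k s : P f k = Some s -> k \in holders s.
Proof. by move=> Hfk; rewrite inE; apply/existsP; exists f; rewrite Hfk. Qed.

Lemma mult_le s : mult s <= K.
Proof. by rewrite /mult -[X in _ <= X]card_ord max_card. Qed.

Definition iv_len : nat := K`!.

Definition seg_len (s : nat) : nat := iv_len %/ (mult s).-1.

Definition partners (s : nat) (i : 'I_K) : seq 'I_K := enum (holders s :\ i).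

(* Bit [c] of the segment of reducer [i]'s IV labelled by partner [j]. *)
Definition seg_bit (s : nat) (i j : 'I_K) (c : nat) : nat :=
  c * (mult s).-1 + index j (partners s i).

Definition partner_at (s : nat) (k : 'I_K) (r : nat) : 'I_K :=
  nth k (partners s k) (r %% (mult s).-1).

Definition msg_slots (j : 'I_K) : seq (nat * nat) :=
  flatten [seq if j \in holders s then [seq (s, c) | c <- iota 0 (seg_len s)] else [::]
          | s <- iota 0 S].

Lemma mem_msg_slots j s c :
  ((s, c) \in msg_slots j) = [&& s < S, j \in holders s & c < seg_len s].
Proof.
apply/flatten_mapP/idP.
- case=> s'; rewrite mem_iota add0n => /andP [_ Hs'].
  case: ifP => // Hj /mapP [c']; rewrite mem_iota add0n => Hc [-> ->].
  by rewrite Hs' Hj Hc.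
- case/and3P=> Hs Hj Hc; exists s; first by rewrite mem_iota.
  by rewrite Hj; apply/mapP; exists c; rewrite // mem_iota.
Qed.

Lemma size_msg_slots j :
  size (msg_slots j) = \sum_(0 <= s < S) (j \in holders s) * seg_len s.
Proof.
rewrite size_flatten /shape -map_comp sumnE big_map /index_iota subn0.
apply: eq_bigr => s _ /=; case: ifP => _; last by rewrite mul0n.
by rewrite size_map size_iota mul1n.
Qed.

Lemma load_MRA_bits :
  ((S * iv_len + \sum_(2 <= g < K.+1) S_g S P g * (iv_len %/ (g - 1)))%:R
     / (K * 1 * (F * 1) * iv_len)%:R : rat)%R = L_MRA S P.
Proof.
rewrite /L_MRA !muln1.
have Hlen : (iv_len%:R : rat) != 0%R by rewrite pnatr_eq0 -lt0n fact_gt0.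
have [KF0|KF_gt0] := posnP (K * F).
  by rewrite KF0 !mul0n invr0 !mulr0 add0r big1 // => g _; rewrite mulr0.
move: KF_gt0; rewrite muln_gt0 => /andP [K_gt0 F_gt0].
have HK : (K%:R : rat) != 0%R by rewrite pnatr_eq0 -lt0n.
have HF : (F%:R : rat) != 0%R by rewrite pnatr_eq0 -lt0n.
rewrite natrD natr_sum mulrDl; congr (_ + _)%R.
  by rewrite !natrM; field; rewrite Hlen HK HF.
rewrite big_distrl /=; apply: eq_big_nat => g /andP [g_gt1 g_leK].
have g1_gt0 : 0 < g - 1 by rewrite subn_gt0.
have Hg1 : ((g - 1)%:R : rat) != 0%R by rewrite pnatr_eq0 -lt0n.
rewrite natrM natr_div; last 2 first.
- by apply: dvdn_fact; rewrite g1_gt0 /= leq_subLR add1n ltnW.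
- by rewrite unitfE.
by rewrite !natrM; field; rewrite Hlen HK HF Hg1.
Qed.

Hypothesis HP : is_MRA S P.

Lemma MRA_bound f k s : P f k = Some s -> s < S.
Proof. by have [bound _] := HP; apply: bound. Qed.

Lemma MRA_row_unique f f' k s : P f k = Some s -> P f' k = Some s -> f = f'.
Proof.
move=> Hf Hf'; have [//|ne] := eqVneq f f'.
have [_ [_ [_ C2]]] := HP.
have ne2 : (f, k) != (f', k) by rewrite xpair_eqE negb_and ne.
by case: (C2 _ _ _ _ _ ne2 Hf Hf'); rewrite eqxx.
Qed.

Lemma MRA_star_across f i f' k s :
  i != k -> P f i = Some s -> P f' k = Some s -> P f k = None.
Proof.
move=> ne Hf Hf'; have [_ [_ [_ C2]]] := HP.
have ne2 : (f, i) != (f', k) by rewrite xpair_eqE negb_and ne orbT.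
by case: (C2 _ _ _ _ _ ne2 Hf Hf').
Qed.

Lemma mult_occ s : mult s = occ P s.
Proof.
rewrite /mult /occ.
have -> : holders s = [set fk.2 | fk in [set fk : 'I_F * 'I_K | P fk.1 fk.2 == Some s]].
  apply/setP => j; rewrite inE; apply/existsP/imsetP.
  - by case=> f Hf; exists (f, j) => //; rewrite inE.
  - by case=> [[f k]]; rewrite inE /= => Hf ->; exists f.
apply: card_in_imset => [[f1 k1]] [f2 k2]; rewrite !inE /= => /eqP H1 /eqP H2 /= Hk.
by subst k2; rewrite (MRA_row_unique H1 H2).
Qed.

Lemma mult_gt1 s : s < S -> 1 < mult s.
Proof. by have [_ [_ [C1 _]]] := HP; rewrite mult_occ; apply: C1. Qed.

Lemma seg_lenK s : s < S -> seg_len s * (mult s).-1 = iv_len.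
Proof.
move=> Hs; rewrite /seg_len divnK //; apply: dvdn_fact.
by have := mult_gt1 Hs; have := mult_le s; case: (mult s) => [|[|n]] //= /ltnW.
Qed.

Lemma size_partners s k : k \in holders s -> size (partners s k) = (mult s).-1.
Proof. by move=> Hk; rewrite /partners -cardE /mult (cardsD1 k (holders s)) Hk. Qed.

Lemma partner_atP s k r : s < S -> k \in holders s ->
  [/\ partner_at s k r \in holders s, partner_at s k r != k
    & index (partner_at s k r) (partners s k) = r %% (mult s).-1].
Proof.
move=> Hs Hk.
have Hr : r %% (mult s).-1 < size (partners s k).
  by rewrite size_partners // ltn_mod; have := mult_gt1 Hs; case: (mult s) => [|[|]].
have : partner_at s k r \in holders s :\ k by rewrite -mem_enum; apply: mem_nth.
rewrite in_setD1 => /andP [ne Hj]; split => //.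
by rewrite index_uniq // enum_uniq.
Qed.

Lemma seg_bit_partner_at s k r : s < S -> k \in holders s ->
  seg_bit s k (partner_at s k r) (r %/ (mult s).-1) = r.
Proof. by move=> Hs Hk; rewrite /seg_bit; have [_ _ ->] := partner_atP r Hs Hk; rewrite -divn_eq. Qed.

Lemma partner_at_slot s k r : s < S -> k \in holders s -> r < iv_len ->
  (s, r %/ (mult s).-1) \in msg_slots (partner_at s k r).
Proof.
move=> Hs Hk Hr; have [Hj _ _] := partner_atP r Hs Hk.
rewrite mem_msg_slots Hs Hj /= ltn_divLR ?seg_lenK //.
by have := mult_gt1 Hs; case: (mult s) => [|[|]].
Qed.

Lemma sum_size_msg_slots :
  \sum_(k < K) size (msg_slots k) = S * iv_len + \sum_(0 <= s < S) seg_len s.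
Proof.
rewrite (eq_bigr _ (fun k _ => size_msg_slots k)) exchange_big /=.
rewrite (eq_big_nat _ _ (F2 := fun s => iv_len + seg_len s)); last first.
  move=> s /andP [_ Hs]; under eq_bigr => k _ do rewrite mulnbl.
  rewrite -big_mkcond /= sum_nat_const -/(mult s).
  rewrite -(seg_lenK Hs); have := mult_gt1 Hs; case: (mult s) => [|n] //= _.
  by rewrite mulSn mulnC addnC.
by rewrite big_split /= sum_nat_const_nat subn0.
Qed.

Lemma sum_seg_len :
  \sum_(0 <= s < S) seg_len s = \sum_(2 <= g < K.+1) S_g S P g * (iv_len %/ (g - 1)).
Proof.
rewrite big_mkord (eq_bigr (fun s : 'I_S =>
  \sum_(2 <= g < K.+1) (occ P s == g) * (iv_len %/ (g - 1)))); last first.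
  move=> s _; rewrite sum_nat_indicator /seg_len ?subn1 ?mult_occ //.
  by rewrite -mult_occ mult_gt1 //= ltnS mult_le.
rewrite exchange_big /=; apply: eq_bigr => g _.
rewrite /S_g -sum_nat_const [RHS]big_mkcond /=; apply: eq_bigr => s _.
by rewrite inE mulnbl.
Qed.

Section Scheme.

Variables (Lam : nat) (M : 'I_Lam -> {set 'I_F}) (Conn : 'I_K -> {set 'I_Lam}).
Hypothesis Hacc : forall (k : 'I_K) (f : 'I_F), P f k = None -> f \in access M Conn k.

Definition fun_of (k : 'I_K) : 'I_(K * 1) := cast_ord (esym (muln1 K)) k.
Definition file_of (f : 'I_F) : 'I_(F * 1) := cast_ord (esym (muln1 F)) f.
Definition batch_of (n : 'I_(F * 1)) : 'I_F := cast_ord (muln1 F) n.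

Definition IV := IVs (K * 1) (F * 1) iv_len.

Definition same_on_access (k : 'I_K) (v v' : IV) : Prop :=
  forall q (n : 'I_(F * 1)), file_acc 1 (access M Conn k) n -> v q n = v' q n.

Lemma file_acc_file_of B (f : 'I_F) : file_acc 1 B (file_of f) = (f \in B).
Proof.
apply/existsP/idP.
- by case=> f' /andP [Hf /eqP]; rewrite divn1 /= => /val_inj ->.
- by move=> Hf; exists f; rewrite Hf /= divn1.
Qed.

(* Bit [r] of the IV needed by reducer [i] because of integer [s]. *)
Definition wanted (v : IV) (s : nat) (i : 'I_K) (r : nat) : bool :=
  if [pick f | P f i == Some s] is Some f then nth false (v (fun_of i) (file_of f)) r
  else false.

Definition coded_bit (v : IV) (j : 'I_K) (sc : nat * nat) : bool :=
  \big[addb/false]_(i in holders sc.1 :\ j) wanted v sc.1 i (seg_bit sc.1 i j sc.2).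

Definition encode (j : 'I_K) (v : IV) : seq bool := [seq coded_bit v j sc | sc <- msg_slots j].

Definition decoded_bit (k : 'I_K) (X : 'I_K -> seq bool) (v : IV) (f : 'I_F) (r : nat) :=
  if P f k is Some s then
    let j := partner_at s k r in
    let c := r %/ (mult s).-1 in
    nth false (X j) (index (s, c) (msg_slots j)) (+)
    \big[addb/false]_(i in holders s :\ k :\ j) wanted v s i (seg_bit s i j c)
  else false.

Definition decode (k : 'I_K) (X : 'I_K -> seq bool) (v : IV)
    (q : 'I_(K * 1)) (n : 'I_(F * 1)) : iv_len.-tuple bool :=
  if file_acc 1 (access M Conn k) n then v q n
  else [tuple decoded_bit k X v (batch_of n) r | r < iv_len].

Lemma wanted_local s i k v v' r : k \in holders s -> i \in holders s -> i != k ->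
  same_on_access k v v' -> wanted v s i r = wanted v' s i r.
Proof.
rewrite inE => /existsP [fk /eqP Hk] _ ne Hv.
rewrite /wanted; case: pickP => // f /eqP Hf.
by rewrite Hv // file_acc_file_of Hacc // (MRA_star_across ne Hf Hk).
Qed.

Lemma encode_local k v v' : same_on_access k v v' -> encode k v = encode k v'.
Proof.
move=> Hv; apply/eq_in_map => -[s c]; rewrite mem_msg_slots => /and3P [_ Hk _].
apply: eq_bigr => i; rewrite in_setD1 => /andP [ne Hi].
exact: wanted_local Hk Hi ne Hv.
Qed.

Lemma decode_local k X X' v v' : (forall j, j != k -> X j = X' j) ->
  same_on_access k v v' -> decode k X v = decode k X' v'.
Proof.
move=> HX Hv; apply: functional_extensionality_dep => q.
apply: functional_extensionality_dep => n.
rewrite /decode; case: ifP => Hn; first exact: Hv.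
apply: eq_from_tnth => r; rewrite !tnth_mktuple /decoded_bit.
case Hfk: (P _ k) => [s|] //; have Hk := mem_holders Hfk.
have [_ ne _] := partner_atP r (MRA_bound Hfk) Hk.
rewrite HX //; congr addb; apply: eq_bigr => i.
rewrite !in_setD1 => /and3P [_ ne' Hi]; exact: wanted_local Hk Hi ne' Hv.
Qed.

(* The coded bit of partner [j] is the wanted bit of [k] plus the terms of the
   other holders, which [k] cancels. *)
Lemma decode_correct k v q n : val q = val k ->
  decode k (fun j => encode j v) v q n = v q n.
Proof.
move=> Hq; rewrite /decode; case: ifP => // Hn.
set f := batch_of n; have En : n = file_of f by apply: val_inj.
case Hfk: (P f k) => [s|]; last by move: Hn; rewrite En file_acc_file_of Hacc.
have Hs := MRA_bound Hfk; have Hk := mem_holders Hfk.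
apply: eq_from_tnth => r; rewrite tnth_mktuple /decoded_bit Hfk (tnth_nth false).
have [Hj ne _] := partner_atP r Hs Hk.
have Hslot := partner_at_slot Hs Hk (ltn_ord r).
move: Hj ne Hslot; set j := partner_at s k r; set c := r %/ _ => Hj ne Hslot.
rewrite (nth_map (s, c)) ?index_mem // nth_index // /coded_bit /=.
rewrite (bigD1 k) /=; last by rewrite in_setD1 eq_sym ne Hk.
rewrite (eq_bigl (mem (holders s :\ k :\ j))) => [|i]; last first.
  by rewrite !inE andbAC -andbA.
rewrite addbK /wanted; case: pickP => [f' /eqP Hf'|/(_ f)]; last by rewrite Hfk eqxx.
have -> : q = fun_of k by apply: val_inj.
by rewrite (MRA_row_unique Hf' Hfk) En seg_bit_partner_at.
Qed.

End Scheme.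

End MapReduceArray.

Theorem theorem1 (K F S : nat) (P : array F K) (HP : is_MRA S P)
  (Lam : nat) (M : 'I_Lam -> {set 'I_F}) (Conn : 'I_K -> {set 'I_Lam})
  (Hacc : forall (k : 'I_K) (f : 'I_F), P f k = None -> f \in access M Conn k) :
  achievable M Conn (L_MRA S P).
Proof.
exists 1, 1, (iv_len K), (fun k => size (msg_slots S P k)), (encode S P).
exists (decode S P M Conn).
split; first by rewrite fact_gt0.
split; first by move=> k v; rewrite size_map.
split; first by move=> k v v' Hv; exact: (encode_local HP Hacc Hv).
split; first by move=> k X X' v v' HX Hv; exact: (decode_local HP Hacc HX Hv).
split; first by move=> k v q n; rewrite divn1 => Hq; exact: (decode_correct HP Hacc v n Hq).
by rewrite sum_size_msg_slots // sum_seg_len // load_MRA_bits.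
Qed.
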